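(* Let $G$ be a connected graph of order $n$, let $\delta>0$ be real, let $k=\lceil n/\delta\rceil$, and suppose that $n\ge 12k$. Let $T$ be a shortest $\delta$-tour in $G$. Then there is a set $Z\subseteq P(G)$ of points stopped at by $T$ with $|Z|\le 12k$ such that $d_G(p,Z)\le\delta$ for every point $p\in P(G)$.
   Context: Continuous graph model: for a connected simple graph $G$, each edge $uv$ is viewed as a unit-length interval whose endpoints are the vertices $u,v$. $P(G)$ is the set of all points $p(u,v,\lambda)$ for $uv\in E(G)$, $\lambda\in[0,1]$, where $p(u,v,\lambda)=p(v,u,1-\lambda)$, $p(u,v,0)=u$, $p(u,v,1)=v$. A walk is a finite sequence of points $(p_0,\dots,p_z)$ in which any two consecutive points are distinct and lie on a common edge $uv$, say $p_{i-1}=p(u,v,\lambda)$, $p_i=p(u,v,\mu)$; this step has length $|\lambda-\mu|$ and covers all points of that edge between them. The length of a walk is the sum of the lengths of its steps; $d_G(p,q)$ is the minimum length of a walk from $p$ to $q$, and $d_G(p,Z)=\inf_{q\in Z}d_G(p,q)$. A tour is a walk $T=(p_0,\dots,p_z)$ with $p_0=p_z$; $T$ stops at the points $p_0,\dots,p_z$, and the points of the tour are all points covered by its steps. For $\delta\ge 0$, a $\delta$-tour is a tour $T$ such that every $p\in P(G)$ has distance at most $\delta$ from some point of $T$; a shortest $\delta$-tour is one of minimum length. *)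

From HB Require Import structures.
From mathcomp Require Import all_boot all_order all_algebra.
From mathcomp Require Import boolp classical_sets reals.
Set Implicit Arguments. Unset Strict Implicit. Unset Printing Implicit Defensive.
Import Order.TTheory GRing.Theory Num.Theory.
Local Open Scope ring_scope.
Local Open Scope classical_set_scope.

Section ContGraph.
Variables (R : realType) (V : finType) (e : rel V).

Definition simple_graph := symmetric e /\ irreflexive e.
Definition connected_graph := forall x y : V, connect e x y.

(* A gpoint p(u,v,lam) is represented by the triple (u, v, lam). *)
Definition gpoint := (V * V * R)%type.

Definition is_point (p : gpoint) : Prop :=
  e p.1.1 p.1.2 /\ 0 <= p.2 <= 1.

Definition vertex_of (p : gpoint) : option V :=
  if p.2 == 0 then Some p.1.1 else if p.2 == 1 then Some p.1.2 else None.

(* Equality of points of P(G):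
   p(u,v,lam) = p(v,u,1-lam), p(u,v,0) = u, p(u,v,1) = v. *)
Definition same_point (p q : gpoint) : Prop :=
  p = q \/ (p.1.1 = q.1.2 /\ p.1.2 = q.1.1 /\ p.2 = 1 - q.2)
  \/ (exists w, vertex_of p = Some w /\ vertex_of q = Some w).

(* A step from p(u,v,lam) to p(u,v,mu), written (u, v, lam, mu). *)
Definition step := (V * V * R * R)%type.
Definition step_start (s : step) : gpoint := (s.1.1.1, s.1.1.2, s.1.2).
Definition step_end (s : step) : gpoint := (s.1.1.1, s.1.1.2, s.2).
Definition step_valid (s : step) : Prop :=
  e s.1.1.1 s.1.1.2 /\ 0 <= s.1.2 <= 1 /\ 0 <= s.2 <= 1 /\ s.1.2 != s.2.
Definition step_length (s : step) : R := `|s.1.2 - s.2|.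
Definition step_covers (s : step) (q : gpoint) : Prop :=
  exists nu : R, Num.min s.1.2 s.2 <= nu <= Num.max s.1.2 s.2 /\
    same_point q (s.1.1.1, s.1.1.2, nu).

Record walk := Walk { wstart : gpoint; wsteps : seq step }.

Fixpoint chain_ok (p : gpoint) (l : seq step) : Prop :=
  match l with
  | [::] => True
  | s :: l' => step_valid s /\ same_point p (step_start s) /\ chain_ok (step_end s) l'
  end.

Definition wend (w : walk) : gpoint := last (wstart w) [seq step_end s | s <- wsteps w].

Definition is_walk (w : walk) : Prop := is_point (wstart w) /\ chain_ok (wstart w) (wsteps w).

Definition walk_length (w : walk) : R := \sum_(s <- wsteps w) step_length s.

Definition walk_from_to (w : walk) (p q : gpoint) : Prop :=
  is_walk w /\ same_point (wstart w) p /\ same_point (wend w) q.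

Definition dist (p q : gpoint) : R :=
  inf [set l | exists w, walk_from_to w p q /\ walk_length w = l].

Definition is_tour (T : walk) : Prop := is_walk T /\ same_point (wend T) (wstart T).

Definition stops (T : walk) : seq gpoint := wstart T :: [seq step_end s | s <- wsteps T].

(* points of the tour: points covered by its steps (together with p_0,
   relevant only for the trivial tour with no steps) *)
Definition tour_point (T : walk) (q : gpoint) : Prop :=
  same_point q (wstart T) \/ exists2 s, s \in wsteps T & step_covers s q.

Definition is_delta_tour (delta : R) (T : walk) : Prop :=
  is_tour T /\ forall p, is_point p -> exists q, tour_point T q /\ dist p q <= delta.

Definition shortest_delta_tour (delta : R) (T : walk) : Prop :=
  is_delta_tour delta T /\
  forall T', is_delta_tour delta T' -> walk_length T <= walk_length T'.

End ContGraph.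

(* The distance in P(G) has an explicit formula in terms of graph distances
   of the ends of the two edges involved; hence it is a metric, and on a
   segment of an edge the distance to a fixed point p is, at one end of the
   segment, at most the maximum of 1 and its value at any inner point. Since
   12k <= n forces delta >= 12, the stops of any delta-tour delta-cover P(G).
   Take a minimal sub-cover Z of the stops. Every z in Z has a private point
   p_z within delta of z and farther than delta from the rest of Z, and the
   vertex sets {w | d(p_z,w) + d(w,z) <= delta} are pairwise disjoint by the
   triangle inequality. Each contains at least delta/12 vertices: those of a
   shortest route from p_z to z when d(p_z,z) >= delta/2, and otherwise the
   first delta/4 vertices of a shortest path from z to a vertex farther than
   delta/4 from z, which exists because z alone does not cover P(G). Thus
   |Z| delta/12 <= n, i.e. |Z| <= 12 n/delta <= 12k. *)

From HB Require Import structures.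
From mathcomp Require Import all_boot all_order all_algebra.
From mathcomp Require Import boolp classical_sets reals.
From mathcomp Require Import lra ring zify.
Import Order.TTheory GRing.Theory Num.Theory.
Set Implicit Arguments. Unset Strict Implicit. Unset Printing Implicit Defensive.
Local Open Scope ring_scope.

(** * Points and walks *)

Section SamePoint.
Variables (R : realType) (V : finType).
Implicit Types p q r : gpoint R V.

Lemma vertex_of_flip (u v : V) (l : R) :
  vertex_of ((v, u, 1 - l) : gpoint R V) = vertex_of ((u, v, l) : gpoint R V).
Proof.
rewrite /vertex_of /=.
have [->|l0] := eqVneq l 0; first by rewrite subr0 oner_eq0 eqxx.
have [->|l1] := eqVneq l 1; first by rewrite subrr eqxx.
have /negbTE -> : 1 - l != 0 by rewrite subr_eq0 eq_sym.
by have /negbTE -> : 1 - l != 1 by rewrite -subr_eq0 addrAC subrr add0r oppr_eq0.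
Qed.

Lemma same_point_refl p : same_point p p.
Proof. by left. Qed.

Lemma same_point_sym p q : same_point p q -> same_point q p.
Proof.
case=> [->|[[h1 [h2 h3]]|[w [h1 h2]]]]; first by left.
  by right; left; rewrite h3 opprB addrC subrK.
by right; right; exists w.
Qed.

Lemma same_point_trans p q r :
  same_point p q -> same_point q r -> same_point p r.
Proof.
move: p q r => [[a b] l] [[a' b'] l'] [[a'' b''] l''].
case=> [E|[[h1 [h2 h3]]|[w [pw qw]]]]; first by rewrite E.
  case=> [<-|[[g1 [g2 g3]]|[w [qw rw]]]]; first by right; left.
    by left; simpl in *; subst; rewrite opprB addrC subrK.
  by right; right; exists w; split=> //; simpl in *; subst; rewrite vertex_of_flip.
case=> [<-|[[g1 [g2 g3]]|[w' [qw' rw']]]]; first by right; right; exists w.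
  by right; right; exists w; split=> //; simpl in *; subst; rewrite -vertex_of_flip.
by move: qw'; rewrite qw => -[ww']; right; right; exists w; split=> //; rewrite ww'.
Qed.

Lemma same_point_flip (u v : V) (l : R) :
  same_point ((u, v, l) : gpoint R V) (v, u, 1 - l).
Proof. by right; left; rewrite /= opprB addrC subrK. Qed.

End SamePoint.

Section Walks.
Variables (R : realType) (V : finType) (e : rel V).
Implicit Types (x y z p q : gpoint R V) (s : step R V) (l : seq (step R V)).

Lemma point_step_start s : step_valid e s -> is_point e (step_start s).
Proof. by case=> ? []. Qed.

Lemma point_step_end s : step_valid e s -> is_point e (step_end s).
Proof. by case=> ? [? []]. Qed.

Lemma point_last_chain q l : is_point e q -> chain_ok e q l ->
  is_point e (last q [seq step_end s | s <- l]).
Proof.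
elim: l q => [|s l IH] q //= _ [vs [_ ch]].
exact: IH (point_step_end vs) ch.
Qed.

Lemma point_wend (w : walk R V) : is_walk e w -> is_point e (wend w).
Proof. by case; apply: point_last_chain. Qed.

Lemma chain_step_mem q l s : chain_ok e q l -> s \in l -> step_valid e s /\
  exists2 z, z \in q :: [seq step_end t | t <- l] & same_point z (step_start s).
Proof.
elim: l q => [|s0 l IH] q //= [v0 [q0 ch]]; rewrite inE => /predU1P [->|sl].
  by split=> //; exists q; rewrite ?mem_head.
have [vs [z zl zs]] := IH _ ch sl; split=> //.
by exists z; rewrite // inE zl orbT.
Qed.

Lemma point_stops (T : walk R V) z : is_walk e T -> z \in stops T -> is_point e z.
Proof.
case=> pT chT; rewrite inE => /predU1P [-> //|/mapP [s sT ->]].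
by have [vs _] := chain_step_mem chT sT; apply: point_step_end.
Qed.

Lemma walk_length_ge0 (w : walk R V) : 0 <= walk_length w.
Proof. by apply: sumr_ge0 => s _; apply: normr_ge0. Qed.

Definition reach x y (L : R) :=
  exists w, walk_from_to e w x y /\ walk_length w <= L.

Lemma reach_refl x : is_point e x -> reach x x 0.
Proof.
move=> px; exists (Walk x [::]); split; last by rewrite /walk_length big_nil.
by split; [split|split; left].
Qed.

Lemma reach_same_point x x' y y' L : reach x y L ->
  same_point x x' -> same_point y y' -> reach x' y' L.
Proof.
case=> w [[ww [wx wy]] wL] xx' yy'; exists w; split=> //.
by split=> //; split; [apply: same_point_trans xx' | apply: same_point_trans yy'].
Qed.

Lemma reach_le x y L L' : L <= L' -> reach x y L -> reach x y L'.
Proof. by move=> LL' [w [xy wL]]; exists w; split=> //; apply: le_trans LL'. Qed.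

Lemma reach_min x y L L' : reach x y L -> reach x y L' -> reach x y (Num.min L L').
Proof. by case: (leP L L'). Qed.

Lemma chain_rcons q l s : chain_ok e q l ->
  same_point (last q [seq step_end s | s <- l]) (step_start s) -> step_valid e s ->
  chain_ok e q (rcons l s).
Proof.
elim: l q => [|s0 l IH] q //= [v0 [q0 ch]] ls vs.
by split=> //; split=> //; apply: IH.
Qed.

Lemma reach_step x y L s : reach x y L -> step_valid e s ->
  same_point y (step_start s) -> reach x (step_end s) (L + step_length s).
Proof.
case=> w [[[pw chw] [wx wy]] wL] vs ys.
exists (Walk (wstart w) (rcons (wsteps w) s)); split.
  split; first split=> //=.
    by apply: chain_rcons chw _ vs; apply: same_point_trans wy ys.
  by split=> //; rewrite /wend /= map_rcons last_rcons; left.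
by rewrite /walk_length /= -cats1 big_cat big_seq1 lerD2r.
Qed.

Lemma reach_edge x u v (m1 m2 : R) L : reach x (u, v, m1) L -> e u v ->
  0 <= m1 <= 1 -> 0 <= m2 <= 1 -> reach x (u, v, m2) (L + `|m1 - m2|).
Proof.
move=> r uv m1P m2P; have [<-|m12] := eqVneq m1 m2.
  by apply: reach_le r; rewrite subrr normr0 addr0.
by apply: (reach_step (s := (u, v, m1, m2)) r) => //; left.
Qed.

Lemma reach_chain x q l L : reach x q L -> chain_ok e q l ->
  reach x (last q [seq step_end s | s <- l]) (L + \sum_(s <- l) step_length s).
Proof.
elim: l q L => [|s l IH] q L /=; first by rewrite big_nil addr0.
move=> r [vs [qs ch]]; rewrite big_cons addrA.
exact: IH (reach_step r vs qs) ch.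
Qed.

Lemma reach_trans x y z L L' : reach x y L -> reach y z L' -> reach x z (L + L').
Proof.
move=> rxy [w [[[_ chw] [wy wz]] wL]].
apply: (@reach_le _ _ (L + walk_length w)); first by rewrite lerD2l.
apply: reach_same_point (reach_chain _ chw) (same_point_refl _) wz.
exact: reach_same_point rxy (same_point_refl _) (same_point_sym wy).
Qed.

Lemma reach_rev_chain q l : is_point e q -> chain_ok e q l ->
  reach (last q [seq step_end s | s <- l]) q (\sum_(s <- l) step_length s).
Proof.
elim: l q => [|s l IH] q /= pq; first by rewrite big_nil => _; apply: reach_refl.
case=> vs [qs ch]; have r := IH _ (point_step_end vs) ch.
move: vs qs r => [uv [m1P [m2P _]]] qs r.
rewrite big_cons addrC /step_length distrC.
exact: reach_same_point (reach_edge r uv m2P m1P) (same_point_refl _) (same_point_sym qs).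
Qed.

Lemma reach_sym x y L : reach x y L -> reach y x L.
Proof.
case=> w [[[pw chw] [wx wy]] wL].
apply: (reach_le wL).
exact: reach_same_point (reach_rev_chain pw chw) wy wx.
Qed.

Lemma dist_le_reach x y L : reach x y L -> dist e x y <= L.
Proof.
case=> w [xy wL]; apply: le_trans wL; apply: ge_inf; last by exists w.
by exists 0 => _ [w' [_ <-]]; apply: walk_length_ge0.
Qed.

Lemma dist_same_point x y y' : same_point y y' -> dist e x y = dist e x y'.
Proof.
move=> yy'; rewrite /dist; congr inf; apply/seteqP; split=> _ [w [[ww [wx wy]] <-]];
  exists w; do 3?split=> //.
  exact: same_point_trans yy'.
exact: same_point_trans wy (same_point_sym yy').
Qed.

End Walks.

Arguments dist_same_point {R V e} x {y y'}.

(** * The distance formula *)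

Section GraphDistance.
Variables (V : finType) (e : rel V).
Hypothesis conn : connected_graph e.

Definition has_path_of_size (u v : V) (m : nat) : bool :=
  `[< exists s, [/\ path e u s, last u s = v & size s = m] >].

Lemma has_path_of_some_size u v : exists m, has_path_of_size u v m.
Proof.
have /connectP [s us sv] := conn u v.
by exists (size s); apply/asboolP; exists s.
Qed.

Definition gdist (u v : V) : nat := ex_minn (has_path_of_some_size u v).

Lemma gdist_min u v s : path e u s -> last u s = v -> (gdist u v <= size s)%N.
Proof.
move=> us sv; rewrite /gdist; case: ex_minnP => m _; apply.
by apply/asboolP; exists s.
Qed.

Lemma gdist_shortest_path u v :
  exists s, [/\ path e u s, last u s = v, uniq (u :: s) & size s = gdist u v].
Proof.
rewrite /gdist; case: ex_minnP => m /asboolP [s [us sv <-]] sizeP.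
move: sv; case: (shortenP us) => s' us' uniq_s' sub_s' sv; exists s'; split=> //.
apply/eqP; rewrite eqn_leq; apply/andP; split.
  by case/andP: uniq_s' => _ /uniq_leq_size; apply.
by apply: sizeP; apply/asboolP; exists s'.
Qed.

Lemma gdistnn u : gdist u u = 0%N.
Proof. by apply/eqP; rewrite -leqn0; apply: (@gdist_min u u [::]). Qed.

Lemma gdist_edge u w v : e w v -> (gdist u v <= (gdist u w).+1)%N.
Proof.
move=> wv; have [s [us sw _ <-]] := gdist_shortest_path u w.
rewrite -(size_rcons s v); apply: gdist_min; last by rewrite last_rcons.
by rewrite rcons_path us sw.
Qed.

End GraphDistance.

Section VertexPoints.
Variables (R : realType) (V : finType) (e : rel V).

Definition nbr (u : V) : V := odflt u [pick v | e u v].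

Lemma connected_nbr_edge (a b : V) :
  connected_graph e -> e a b -> forall u, e u (nbr u).
Proof.
move=> conn ab u; rewrite /nbr; case: pickP => [v //|no_nbr]; exfalso.
have /connectP [[|v s] /= us ua] := conn u a.
  by move: (no_nbr b); rewrite -ua ab.
by case/andP: us => uv _; move: (no_nbr v); rewrite uv.
Qed.

Hypothesis nbr_edge : forall u, e u (nbr u).

(* A vertex u is the point p(u, v, 0) for a fixed neighbour v of u. *)
Definition vpoint (u : V) : gpoint R V := (u, nbr u, 0).

Lemma point_vpoint u : is_point e (vpoint u).
Proof. by split=> //=; rewrite lexx ler01. Qed.

Lemma same_point_vpoint0 u v : same_point (vpoint u) (u, v, 0).
Proof. by right; right; exists u; rewrite /vertex_of /vpoint /= eqxx. Qed.

Lemma same_point_vpoint1 u v : same_point (vpoint v) (u, v, 1).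
Proof. by right; right; exists v; rewrite /vertex_of /vpoint /= oner_eq0 !eqxx. Qed.

End VertexPoints.

Arguments point_vpoint {R V e}.
Arguments same_point_vpoint0 {R V e}.
Arguments same_point_vpoint1 {R V e}.

Lemma le_min_addr (R : realDomainType) (a b a' b' t : R) :
  a' <= a + t -> b' <= b + t -> Num.min a' b' <= Num.min a b + t.
Proof.
move=> aa' bb'; rewrite addr_minl le_min !ge_min.
by rewrite aa' bb' orbT.
Qed.

Section DistanceFormula.
Variables (R : realType) (V : finType) (e : rel V).
Hypotheses (esym : symmetric e) (eirr : irreflexive e) (conn : connected_graph e).
Hypothesis nbr_edge : forall u, e u (nbr e u).
Local Notation gdist := (gdist conn).
Local Notation vpoint := (@vpoint R V e).
Local Notation reach := (reach e).
Implicit Types (x y : gpoint R V) (u v w : V).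

Definition vdist x v : R :=
  Num.min (x.2 + (gdist x.1.1 v)%:R) (1 - x.2 + (gdist x.1.2 v)%:R).

Definition via_ends x y : R :=
  Num.min (vdist x y.1.1 + y.2) (vdist x y.1.2 + (1 - y.2)).

(* A shortest walk from x to y either stays on an edge containing both, or
   leaves the edge of x and enters the edge of y through one of their ends. *)
Definition pdist x y : R :=
  if (y.1.1 == x.1.1) && (y.1.2 == x.1.2) then Num.min (via_ends x y) `|x.2 - y.2|
  else if (y.1.1 == x.1.2) && (y.1.2 == x.1.1) then Num.min (via_ends x y) `|1 - x.2 - y.2|
  else via_ends x y.

Lemma vdist_edge x u v : e u v -> vdist x u <= vdist x v + 1.
Proof.
move=> uv; have vu : e v u by rewrite esym.
by rewrite /vdist; apply: le_min_addr;
  rewrite -[leRHS]addrA lerD2l natr1 ler_nat gdist_edge.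
Qed.

Lemma vdist_end1 x : vdist x x.1.1 <= x.2.
Proof. by rewrite /vdist ge_min gdistnn addr0 lexx. Qed.

Lemma vdist_end2 x : vdist x x.1.2 <= 1 - x.2.
Proof. by rewrite /vdist ge_min gdistnn addr0 lexx orbT. Qed.

Lemma pdist_vertex x y w : is_point e x -> is_point e y ->
  vertex_of y = Some w -> pdist x y = vdist x w.
Proof.
move=> [_ /andP [x0 x1]]; move: y => [[c d] m] [/= cd _].
rewrite /vertex_of /=.
have [-> [<-]|m0] := eqVneq m 0.
  have via_c : Num.min (vdist x c + 0) (vdist x d + (1 - 0)) = vdist x c.
    by rewrite addr0 subr0 min_l // vdist_edge.
  rewrite /pdist /via_ends /= via_c; case: ifP => [/andP [/eqP -> _]|_].
    by rewrite subr0 ger0_norm // min_l // vdist_end1.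
  case: ifP => [/andP [/eqP -> _]|_] //.
  by rewrite subr0 ger0_norm ?subr_ge0 // min_l // vdist_end2.
have [-> [<-]|//] := eqVneq m 1.
have via_d : Num.min (vdist x c + 1) (vdist x d + (1 - 1)) = vdist x d.
  by rewrite subrr addr0 min_r // vdist_edge // esym.
rewrite /pdist /via_ends /= via_d; case: ifP => [/andP [_ /eqP ->]|_].
  by rewrite distrC ger0_norm ?subr_ge0 // min_l // vdist_end2.
case: ifP => [/andP [_ /eqP ->]|_] //.
by rewrite addrAC subrr add0r normrN ger0_norm // min_l // vdist_end1.
Qed.

Lemma pdist_flip x u v m : is_point e x -> pdist x (u, v, m) = pdist x (v, u, 1 - m).
Proof.
move=> [x12 _]; rewrite /pdist /via_ends /=.
have -> : 1 - (1 - m) = m by rewrite opprB addrC subrK.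
rewrite [Num.min (vdist x v + _) _]minC.
have x1x2 : x.1.1 != x.1.2 by apply: contraTneq x12 => ->; rewrite eirr.
rewrite [(v == x.1.1) && _]andbC [(v == x.1.2) && _]andbC.
have n1 : `|1 - x.2 - (1 - m)| = `|x.2 - m| by rewrite -normrN; congr `|_|; ring.
have n2 : `|x.2 - (1 - m)| = `|1 - x.2 - m| by rewrite -normrN; congr `|_|; ring.
case: (eqVneq u x.1.1) => [ux|ux] /=; case: (eqVneq v x.1.2) => [vx|vx] /=.
- by rewrite ux (negbTE x1x2) /= n1.
all: by case: (u == x.1.2) => //=; case: (v == x.1.1) => //=; rewrite n2.
Qed.

Lemma pdist_same_point x y y' : is_point e x -> is_point e y -> is_point e y' ->
  same_point y y' -> pdist x y = pdist x y'.
Proof.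
move: y y' => [[c d] m] [[c' d'] m'] px py py'.
case=> [->|[[/= -> [-> ->]]|[w [yw y'w]]]] //.
  by rewrite (pdist_flip _ _ _ px) opprB addrC subrK.
by rewrite (pdist_vertex px py yw) (pdist_vertex px py' y'w).
Qed.

Lemma pdist_step x (s : step R V) :
  pdist x (step_end s) <= pdist x (step_start s) + step_length s.
Proof.
move: s => [[[c d] m1] m2]; rewrite /pdist /via_ends /step_end /step_start /step_length /=.
set t := `|m1 - m2|.
have ends_step : Num.min (vdist x c + m2) (vdist x d + (1 - m2)) <=
    Num.min (vdist x c + m1) (vdist x d + (1 - m1)) + t.
  have := ler_norm (m1 - m2); have := ler_norm (m2 - m1).
  by rewrite distrC -/t => ? ?; apply: le_min_addr; lra.
by do 2?case: ifP => _ //; apply: le_min_addr => //; apply: ler_distD.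
Qed.

Lemma pdist_chain x q l : is_point e x -> is_point e q -> chain_ok e q l ->
  pdist x (last q [seq step_end s | s <- l]) <= pdist x q + \sum_(s <- l) step_length s.
Proof.
move=> px; elim: l q => [|s l IH] q /= pq; first by rewrite big_nil addr0.
case=> vs [qs ch]; rewrite big_cons addrA.
apply: le_trans (IH _ (point_step_end vs) ch) _.
by rewrite lerD2r (pdist_same_point px pq (point_step_start vs) qs) pdist_step.
Qed.

Lemma pdist_le_walk x y (w : walk R V) : is_point e x -> is_point e y ->
  walk_from_to e w x y -> pdist x y <= walk_length w.
Proof.
move=> px py [[pw chw] [wx wy]].
rewrite -(pdist_same_point px (point_wend (conj pw chw)) py wy).
apply: le_trans (pdist_chain px pw chw) _.
have pdist_self : pdist x x <= 0 by rewrite /pdist !eqxx /= ge_min subrr normr0 lexx orbT.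
by rewrite (pdist_same_point px pw px wx) -[X in _ <= X]add0r lerD2r.
Qed.

Lemma pdist_cases x y : is_point e x -> is_point e y ->
  pdist x y = via_ends x y \/ pdist x y <= 1.
Proof.
move=> [_ /andP [x0 x1]] [_ /andP [y0 y1]]; rewrite /pdist.
case: ifP => _; [|case: ifP => _; last by left].
all: by right; rewrite ge_min ler_norml; apply/orP; right; apply/andP; split; lra.
Qed.

Lemma reach_end1 x : is_point e x -> reach x (vpoint x.1.1) x.2.
Proof.
move: x => [[a b] l] px; move: (px) => [/= ab l01].
have := reach_edge (m2 := 0) (reach_refl px) ab l01; rewrite !lexx ler01 => /(_ isT).
rewrite subr0 add0r ger0_norm; last by case/andP: l01.
by move/reach_same_point; apply=> //; [left | apply/same_point_sym/same_point_vpoint0].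
Qed.

Lemma reach_end2 x : is_point e x -> reach x (vpoint x.1.2) (1 - x.2).
Proof.
move: x => [[a b] l] px; move: (px) => [/= ab l01].
have := reach_edge (m2 := 1) (reach_refl px) ab l01; rewrite !lexx ler01 => /(_ isT).
rewrite add0r distrC ger0_norm; last by rewrite subr_ge0; case/andP: l01.
by move/reach_same_point; apply=> //; [left | apply/same_point_sym/same_point_vpoint1].
Qed.

Lemma reach_vpoint_edge x u v L : reach x (vpoint u) L -> e u v ->
  reach x (vpoint v) (L + 1).
Proof.
move=> r uv; have r0 := reach_same_point r (same_point_refl _) (same_point_vpoint0 u v).
have := reach_edge (m1 := 0) (m2 := 1) r0 uv; rewrite !lexx ler01 => /(_ isT isT).
rewrite sub0r normrN normr1 => /reach_same_point; apply; first by left.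
exact/same_point_sym/same_point_vpoint1.
Qed.

Lemma reach_vpoint_path_prefix x u s L : path e u s -> reach x (vpoint u) L ->
  forall i, (i <= size s)%N -> reach x (vpoint (nth u (u :: s) i)) (L + i%:R).
Proof.
elim: s u L => [|v s IH] u L /=; first by move=> _ r [|i] //= _; rewrite addr0.
case/andP=> uv vs r [|i] /= i_s; first by rewrite addr0.
rewrite (set_nth_default v) //; have := IH _ _ vs (reach_vpoint_edge r uv) i i_s.
by apply: reach_le; rewrite -natr1; lra.
Qed.

Lemma reach_vpoint_path x u s L : path e u s -> reach x (vpoint u) L ->
  reach x (vpoint (last u s)) (L + (size s)%:R).
Proof.
move=> us r; have := reach_vpoint_path_prefix us r (leqnn (size s)).
by rewrite -[size s]/((size (u :: s)).-1) nth_last.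
Qed.

Lemma reach_vpoint_path_suffix u s : path e u s -> forall i, (i <= size s)%N ->
  reach (vpoint (nth u (u :: s) i)) (vpoint (last u s)) (size s - i)%:R.
Proof.
elim: s u => [|v s IH] u /=.
  by move=> _ [|i] //= _; apply/reach_refl/point_vpoint.
case/andP=> uv vs [|i] /= i_s; last by rewrite (set_nth_default v) // subSS; apply: IH.
have := reach_vpoint_path (s := v :: s) _ (reach_refl (point_vpoint nbr_edge u)).
by rewrite /= uv vs add0r subn0; apply.
Qed.

Lemma reach_vdist x v : is_point e x -> reach x (vpoint v) (vdist x v).
Proof.
move=> px; apply: reach_min.
  have [s [us sv _ <-]] := gdist_shortest_path conn x.1.1 v.
  by rewrite -sv; apply: reach_vpoint_path us (reach_end1 px).
have [s [us sv _ <-]] := gdist_shortest_path conn x.1.2 v.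
by rewrite -sv; apply: reach_vpoint_path us (reach_end2 px).
Qed.

Lemma reach_from_end1 x y L : is_point e y -> reach x (vpoint y.1.1) L ->
  reach x y (L + y.2).
Proof.
move: y => [[c d] m] [/= cd m01] r.
have r0 := reach_same_point r (same_point_refl _) (same_point_vpoint0 c d).
have := reach_edge (m2 := m) r0 cd.
rewrite !lexx ler01 sub0r normrN => /(_ isT m01).
by rewrite ger0_norm //; case/andP: m01.
Qed.

Lemma reach_from_end2 x y L : is_point e y -> reach x (vpoint y.1.2) L ->
  reach x y (L + (1 - y.2)).
Proof.
move: y => [[c d] m] [/= cd m01] r.
have r1 := reach_same_point r (same_point_refl _) (same_point_vpoint1 c d).
have := reach_edge (m2 := m) r1 cd.
rewrite !lexx ler01 => /(_ isT m01).
by rewrite ger0_norm // subr_ge0; case/andP: m01.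
Qed.

Lemma vdist_witness x v : is_point e x -> exists a al,
  [/\ 0 <= al <= 1, reach x (vpoint a) al & vdist x v = al + (gdist a v)%:R].
Proof.
move=> px; move: (px) => [_ /andP [x0 x1]]; rewrite /vdist.
case: leP => _; first by exists x.1.1, x.2; split; rewrite ?x0 ?x1 //; apply: reach_end1.
exists x.1.2, (1 - x.2); split=> //; last exact: reach_end2.
by apply/andP; split; lra.
Qed.

Lemma via_ends_witness x y : is_point e y -> exists c be, [/\ 0 <= be <= 1,
  forall q L, reach q (vpoint c) L -> reach q y (L + be) & via_ends x y = vdist x c + be].
Proof.
move=> py; move: (py) => [_ /andP [y0 y1]]; rewrite /via_ends.
case: leP => _.
  by exists y.1.1, y.2; split; rewrite ?y0 ?y1 // => q L; apply: reach_from_end1.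
exists y.1.2, (1 - y.2); split=> // [|q L]; last exact: reach_from_end2.
by apply/andP; split; lra.
Qed.

Lemma reach_pdist x y : is_point e x -> is_point e y -> reach x y (pdist x y).
Proof.
move=> px py.
have r_ends : reach x y (via_ends x y).
  by apply: reach_min; [apply: reach_from_end1 | apply: reach_from_end2];
    rewrite //; apply: reach_vdist.
move: x y px py r_ends => [[a b] l] [[c d] m] px py r_ends; rewrite /pdist /=.
move: (px) (py) => [/= ab l01] [/= cd m01].
case: ifP => [/andP [/eqP ca /eqP db]|_].
  apply: reach_min => //; rewrite ca db in cd m01 *.
  by have := reach_edge (reach_refl px) ab l01 m01; rewrite add0r.
case: ifP => [/andP [/eqP cb /eqP da]|_] //.
apply: reach_min => //; rewrite cb da in cd m01 *.
have flip := reach_same_point (reach_refl px) (same_point_refl _) (same_point_flip a b l).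
have l01' : 0 <= 1 - l <= 1 by move: l01 => /andP [? ?]; apply/andP; split; lra.
by have := reach_edge flip cd l01' m01; rewrite add0r.
Qed.

Lemma distE x y : is_point e x -> is_point e y -> dist e x y = pdist x y.
Proof.
move=> px py; apply/eqP; rewrite eq_le (dist_le_reach (reach_pdist px py)) /=.
apply: lb_le_inf; first by have [w [xy _]] := reach_pdist px py; exists (walk_length w), w.
by move=> _ [w [xy <-]]; apply: pdist_le_walk.
Qed.

Lemma reach_dist x y : is_point e x -> is_point e y -> reach x y (dist e x y).
Proof. by move=> px py; rewrite distE //; apply: reach_pdist. Qed.

Lemma dist_triangle x y z : is_point e x -> is_point e y -> is_point e z ->
  dist e x z <= dist e x y + dist e y z.
Proof.
by move=> px py pz; apply/dist_le_reach/reach_trans; apply: reach_dist.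
Qed.

Lemma dist_sym x y : is_point e x -> is_point e y -> dist e x y = dist e y x.
Proof.
move=> px py; apply/eqP; rewrite eq_le.
by rewrite !dist_le_reach //; apply/reach_sym/reach_dist.
Qed.

End DistanceFormula.

(** * Stops of a delta-tour *)

Section SegmentBounds.
Variable R : realDomainType.

Lemma via_ends_concave (a b al be nu : R) : al <= nu -> nu <= be ->
  Num.min (Num.min (a + al) (b + (1 - al))) (Num.min (a + be) (b + (1 - be))) <=
  Num.min (a + nu) (b + (1 - nu)).
Proof.
move=> al_nu nu_be; case: (leP (a + nu)) => _.
  by rewrite ge_min; apply/orP; left; rewrite ge_min; apply/orP; left; lra.
by rewrite ge_min; apply/orP; right; rewrite ge_min; apply/orP; right; lra.
Qed.

Lemma segment_end_le (a b k al be nu : R) : 0 <= k <= 1 ->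
  0 <= al -> al <= nu -> nu <= be -> be <= 1 ->
  Num.min (Num.min (Num.min (a + al) (b + (1 - al))) `|k - al|)
          (Num.min (Num.min (a + be) (b + (1 - be))) `|k - be|) <=
  Num.max (Num.min (Num.min (a + nu) (b + (1 - nu))) `|k - nu|) 1.
Proof.
move=> /andP [k0 k1] al0 al_nu nu_be be1.
set fa := Num.min (a + al) _; set fb := Num.min (a + be) _.
set fn := Num.min (a + nu) _.
have f_concave : Num.min fa fb <= fn by apply: via_ends_concave.
rewrite le_max; case: (leP fn `|k - nu|) => _.
  by apply/orP; left; apply: le_trans f_concave; apply: le_min2; rewrite ge_min lexx.
apply/orP; case: (leP k al) => [k_al|al_k].
  left; rewrite ge_min; apply/orP; left; rewrite ge_min; apply/orP; right.
  by rewrite !ler0_norm ?subr_le0 //; lra.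
case: (leP be k) => [be_k|k_be].
  left; rewrite ge_min; apply/orP; right; rewrite ge_min; apply/orP; right.
  by rewrite !ger0_norm ?subr_ge0 //; lra.
right; rewrite ge_min; apply/orP; left; rewrite ge_min; apply/orP; right.
by rewrite ger0_norm ?subr_ge0; lra.
Qed.

End SegmentBounds.

Section TourStops.
Variables (R : realType) (V : finType) (e : rel V).
Hypotheses (esym : symmetric e) (eirr : irreflexive e) (conn : connected_graph e).
Local Notation pdist := (pdist conn).
Local Notation distE := (distE esym eirr conn).

Definition covers (Z : seq (gpoint R V)) (delta : R) :=
  forall p, is_point e p -> exists2 z, z \in Z & dist e p z <= delta.

Lemma pdist_segment p (c d : V) (al be nu : R) : is_point e p ->
  0 <= al -> al <= nu -> nu <= be -> be <= 1 ->
  Num.min (pdist p (c, d, al)) (pdist p (c, d, be)) <= Num.max (pdist p (c, d, nu)) 1.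
Proof.
move=> [_ p01] al0 al_nu nu_be be1; rewrite /pdist /via_ends /=.
case: ifP => _; first exact: segment_end_le.
case: ifP => _; last by rewrite le_max; apply/orP; left; apply: via_ends_concave.
by apply: segment_end_le => //; move: p01 => /andP [? ?]; apply/andP; split; lra.
Qed.

Lemma tour_point_near_stop (T : walk R V) delta p q : 1 <= delta -> is_tour e T ->
  is_point e p -> tour_point T q -> dist e p q <= delta ->
  exists2 z, z \in stops T & dist e p z <= delta.
Proof.
move=> delta1 [[pT chT] _] pp [qT|[s sT [nu [nu_s qs]]]] pq.
  by exists (wstart T); rewrite ?mem_head -?(dist_same_point p qT).
have [vs [z zT zs]] := chain_step_mem chT sT.
move: s sT vs zs nu_s qs => [[[c d] al] be] sT [/= cd [al01 [be01 _]]] zs nu_s qs.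
rewrite (dist_same_point p qs) in pq.
have nu01 : 0 <= nu <= 1.
  move: al01 be01 nu_s => /andP [? ?] /andP [? ?].
  by case: (leP al be) => _ /andP [? ?]; apply/andP; split; lra.
have pt m : 0 <= m <= 1 -> is_point e ((c, d, m) : gpoint R V) by split.
rewrite (distE pp (pt _ nu01)) in pq.
have [p_al|p_be] : pdist p (c, d, al) <= delta \/ pdist p (c, d, be) <= delta.
  have seg_le : Num.max (pdist p (c, d, nu)) 1 <= delta by rewrite ge_max pq delta1.
  move: al01 be01 nu_s => /andP [al0 al1] /andP [be0 be1].
  case: (leP al be) => _ /andP [al_nu nu_be].
    have := le_trans (pdist_segment c d pp al0 al_nu nu_be be1) seg_le.
    by rewrite ge_min => /orP.
  have := le_trans (pdist_segment c d pp be0 al_nu nu_be al1) seg_le.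
  by rewrite ge_min => /orP [] ?; [right | left].
  by exists z; rewrite // (dist_same_point p zs) distE //; apply: pt.
exists (c, d, be); last by rewrite distE //; apply: pt.
by rewrite inE; apply/orP; right; apply/mapP; exists (c, d, al, be).
Qed.

Lemma delta_tour_stops_cover (T : walk R V) delta : 1 <= delta ->
  is_delta_tour e delta T -> covers (stops T) delta.
Proof.
move=> delta1 [tourT nearT] p pp; have [q [qT pq]] := nearT p pp.
exact: tour_point_near_stop delta1 tourT pp qT pq.
Qed.

End TourStops.

(** * Minimal covers and disjoint regions *)

Lemma sum_card_disjoint (T : finType) (I : eqType) (r : seq I) (A : I -> {set T}) :
  uniq r -> {in r &, forall i j, i != j -> [disjoint A i & A j]} ->
  (\sum_(i <- r) #|A i| <= #|T|)%N.
Proof.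
move=> ur disA; suff -> : \sum_(i <- r) #|A i| = #|[set w | has (fun i => w \in A i) r]|.
  exact: max_card.
elim: r ur disA => [|i r IH] /=.
  by rewrite big_nil; symmetry; apply: eq_card0 => w; rewrite inE.
case/andP=> ir ur disA; rewrite big_cons IH //; last first.
  by move=> j k jr kr; apply: disA; rewrite inE ?jr ?kr orbT.
have -> : [set w | has (fun j => w \in A j) (i :: r)] =
    A i :|: [set w | has (fun j => w \in A j) r] by apply/setP => w; rewrite !inE.
rewrite cardsU; suff -> : #|A i :&: [set w | has (fun j => w \in A j) r]| = 0%N.
  by rewrite subn0.
apply: eq_card0 => w; rewrite !inE; apply/negbTE/andP => -[wi /hasP [j jr wj]].
have ij : i != j by apply: contraNneq ir => ->.
have jir : j \in i :: r by rewrite inE jr orbT.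
by rewrite (disjointFr (disA i j (mem_head _ _) jir ij) wi) in wj.
Qed.

Lemma minimal_subseq (T : eqType) (P : seq T -> Prop) (s : seq T) : P s ->
  exists2 s', subseq s' s & P s' /\ forall z, z \in s' -> ~ P (rem z s').
Proof.
move: {2}(size s) (leqnn (size s)) => n; elim: n s => [|n IH] s size_s Ps.
  by exists s => //; split=> // z; move: size_s; rewrite leqn0 => /nilP ->.
have [[z zs Pz]|minimal] := pselect (exists2 z, z \in s & P (rem z s)); last first.
  by exists s => //; split=> // z zs Pz; apply: minimal; exists z.
have [|s' s's] := IH (rem z s) _ Pz; first by rewrite size_rem //; lia.
by exists s' => //; apply: subseq_trans s's (rem_subseq z s).
Qed.

Section PrivatePoints.
Variables (R : realType) (V : finType) (e : rel V).
Implicit Types (Z : seq (gpoint R V)) (p z : gpoint R V) (delta : R).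

Definition private_point Z delta z p :=
  [/\ is_point e p, dist e p z <= delta &
      forall z', z' \in Z -> z' != z -> delta < dist e p z'].

Lemma minimal_cover_private Z delta : uniq Z -> covers e Z delta ->
  (forall z, z \in Z -> ~ covers e (rem z Z) delta) ->
  exists pz, forall z, z \in Z -> private_point Z delta z (pz z).
Proof.
move=> uZ coverZ minimal.
suff /choice [pz pz_private] : forall z, exists p, z \in Z -> private_point Z delta z p.
  by exists pz.
move=> z; have [zZ|] := boolP (z \in Z); last by exists z.
move/existsNP: (minimal z zZ) => [p /not_implyP [pp /forall2NP far]].
have far' z' : z' \in rem z Z -> delta < dist e p z'.
  by move=> z'Z; rewrite ltNge; apply/negP; case: (far z').
exists p => _; split=> // [|z' z'Z z'z].
  have [z' z'Z pz'] := coverZ p pp; have [<- //|z'z] := eqVneq z' z.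
  by have := far' z'; rewrite mem_rem_uniq // inE z'z z'Z ltNge pz' => /(_ isT).
by apply: far'; rewrite mem_rem_uniq // inE z'z.
Qed.

End PrivatePoints.

Lemma size_le_card (T : finType) (A : {set T}) (s : seq T) :
  uniq s -> {subset s <= A} -> (size s <= #|A|)%N.
Proof.
by move=> us sA; rewrite cardE; apply: uniq_leq_size us _ => x /sA; rewrite mem_enum.
Qed.

Section Regions.
Variables (R : realType) (V : finType) (e : rel V).
Hypotheses (esym : symmetric e) (eirr : irreflexive e) (conn : connected_graph e).
Hypothesis nbr_edge : forall u, e u (nbr e u).
Variable delta : R.
Local Notation vpoint := (@vpoint R V e).
Local Notation dist := (dist e).
Local Notation point_vpoint := (point_vpoint nbr_edge).
Local Notation dist_triangle := (dist_triangle esym eirr conn).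
Local Notation dist_sym := (dist_sym esym eirr conn).
Local Notation distE := (distE esym eirr conn).
Implicit Types p y z : gpoint R V.

Definition region p z : {set V} :=
  [set w | dist p (vpoint w) + dist (vpoint w) z <= delta].

Lemma regions_disjoint p1 z1 p2 z2 w :
  is_point e p1 -> is_point e z1 -> is_point e p2 -> is_point e z2 ->
  delta < dist p1 z2 -> delta < dist p2 z1 ->
  w \in region p1 z1 -> w \in region p2 z2 -> False.
Proof.
move=> pp1 pz1 pp2 pz2 far12 far21; rewrite !inE => w1 w2.
have := dist_triangle pp1 (point_vpoint w) pz2.
have := dist_triangle pp2 (point_vpoint w) pz1.
lra.
Qed.

Lemma region_card_near p z : 12 <= delta -> is_point e p -> is_point e z ->
  dist p z < delta / 2 -> (exists2 y, is_point e y & delta < dist y z) ->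
  delta / 12 <= #|region p z|%:R.
Proof.
move=> delta_ge12 pp pz pz_near [y py yz_far].
have [w0 w0_far] : exists w0, delta / 4 < dist (vpoint w0) z.
  apply/not_existsP => all_near.
  have y1z : dist (vpoint y.1.1) z <= delta / 4 by rewrite leNgt; apply/negP/all_near.
  have := dist_triangle py (point_vpoint y.1.1) pz.
  have := dist_le_reach (reach_end1 py).
  by move: py => [_ /andP [_ y1]]; lra.
have [s [u_s s_w0 uniq_s size_s]] := gdist_shortest_path conn z.1.1 w0.
have zw0 : dist z (vpoint w0) <= z.2 + (size s)%:R.
  by apply: dist_le_reach; rewrite -s_w0; apply: reach_vpoint_path u_s (reach_end1 pz).
rewrite (dist_sym (point_vpoint w0) pz) in w0_far.
move: (pz) => [_ /andP [z0 z1]].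
set K := Num.truncn (delta / 4).
have /andP [K_le K_gt] : K%:R <= delta / 4 < K%:R + 1.
  by rewrite natr1; apply: truncn_itv; lra.
have K_size : (K <= (size s).+1)%N by rewrite -(ler_nat R) -[leRHS]natr1; lra.
set W := take K (z.1.1 :: s).
have size_W : size W = K by rewrite size_takel.
apply: (@le_trans _ _ (size W)%:R); first by rewrite size_W; lra.
rewrite ler_nat; apply: size_le_card; first exact: take_uniq.
move=> w /(nthP z.1.1) [i]; rewrite size_W => iK <-; rewrite nth_take //.
have zw : dist z (vpoint (nth z.1.1 (z.1.1 :: s) i)) <= delta / 4.
  apply: le_trans (dist_le_reach (reach_vpoint_path_prefix u_s (reach_end1 pz) _)) _.
    by rewrite -ltnS (leq_trans iK).
  by move: iK; rewrite -(ler_nat R) -natr1 => iK; lra.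
rewrite inE -(dist_sym pz (point_vpoint _)).
have := dist_triangle pp pz (point_vpoint (nth z.1.1 (z.1.1 :: s) i)); lra.
Qed.

Lemma region_card_far p z : 12 <= delta -> is_point e p -> is_point e z ->
  dist p z <= delta -> delta / 2 <= dist p z -> delta / 12 <= #|region p z|%:R.
Proof.
move=> delta_ge12 pp pz pz_le pz_ge.
have pz_ends : dist p z = via_ends conn p z.
  rewrite distE //; case: (pdist_cases conn pp pz) => // pz1.
  by move: pz_ge; rewrite distE //; lra.
have [c [be [be01 reach_z c_ends]]] := via_ends_witness conn p pz.
have [a [al [al01 reach_a a_c]]] := vdist_witness conn c pp.
rewrite c_ends a_c in pz_ends.
have [s [a_s s_c uniq_s size_s]] := gdist_shortest_path conn a c.
move: al01 be01 => /andP [al0 al1] /andP [be0 be1].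
apply: (@le_trans _ _ (size (a :: s))%:R).
  by rewrite /= -[(size s).+1%:R]natr1 size_s; lra.
rewrite ler_nat; apply: size_le_card => // w /(nthP a) [i i_s <-].
have i_s' : (i <= size s)%N by rewrite -ltnS.
have pw := dist_le_reach (reach_vpoint_path_prefix a_s reach_a i_s').
have wz : dist (vpoint (nth a (a :: s) i)) z <= (size s - i)%:R + be.
  by apply/dist_le_reach/reach_z; rewrite -s_c; apply: reach_vpoint_path_suffix.
by rewrite natrB // size_s in wz; rewrite inE; lra.
Qed.

Lemma region_card p z : 12 <= delta -> is_point e p -> is_point e z ->
  dist p z <= delta -> (exists2 y, is_point e y & delta < dist y z) ->
  delta / 12 <= #|region p z|%:R.
Proof.
move=> delta_ge12 pp pz pz_le far_z; case: (leP (delta / 2) (dist p z)) => pz_half.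
  exact: region_card_far.
exact: region_card_near.
Qed.

Lemma private_cover_size (Z : seq (gpoint R V)) (pz : gpoint R V -> gpoint R V) :
  12 <= delta -> uniq Z -> {in Z, forall z, is_point e z} ->
  (forall z, z \in Z -> private_point e Z delta z (pz z)) ->
  (forall z, z \in Z -> exists2 y, is_point e y & delta < dist y z) ->
  (size Z)%:R * (delta / 12) <= #|V|%:R.
Proof.
move=> delta_ge12 uZ pZ private far.
have disjoint_regions : (\sum_(z <- Z) #|region (pz z) z| <= #|V|)%N.
  apply: sum_card_disjoint => // z z' zZ z'Z zz'.
  have [pp _ far_z] := private z zZ; have [pp' _ far_z'] := private z' z'Z.
  apply/pred0P => w /=; apply/negbTE/andP => -[wz wz'].
  apply: regions_disjoint (pp) (pZ z zZ) (pp') (pZ z' z'Z) _ _ wz wz'.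
    by apply: far_z; rewrite // eq_sym.
  exact: far_z'.
apply: le_trans (_ : (\sum_(z <- Z) #|region (pz z) z|)%:R <= _); last by rewrite ler_nat.
rewrite mulr_natl -iter_addr_0 -count_predT -big_const_seq natr_sum !big_seq.
apply: ler_sum => z zZ; have [pp pzz _] := private z zZ.
exact: region_card delta_ge12 pp (pZ z zZ) pzz (far z zZ).
Qed.

End Regions.

Section CeilingBounds.
Variable R : realType.
Implicit Types (delta : R) (m n : nat).

Lemma ceil_div_gt0 n delta : 0 < delta -> (0 < n)%N -> 0 < Num.ceil (n%:R / delta).
Proof. by move=> delta_gt0 n_gt0; rewrite ceil_gt0 // divr_gt0 // ltr0n. Qed.

Lemma ceil_div_bound_ge12 n delta : 0 < delta -> (0 < n)%N ->
  (12 * Num.ceil (n%:R / delta) <= n%:Z)%R -> 12 <= delta.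
Proof.
move=> delta_gt0 n_gt0; set k := Num.ceil _ => k_le.
have k_gt0 : 0 < k%:~R :> R by rewrite ltr0z ceil_div_gt0.
have n_le : n%:R <= k%:~R * delta by rewrite -ler_pdivrMr // ceil_ge.
have : 12 * k%:~R <= n%:R :> R by move: k_le; rewrite -(ler_int R) intrM; apply.
nra.
Qed.

Lemma size_le_ceil_div m n delta : 0 < delta ->
  m%:R * (delta / 12) <= n%:R -> (m%:Z <= 12 * Num.ceil (n%:R / delta))%R.
Proof.
move=> delta_gt0 m_le; rewrite -(ler_int R) intrM.
have : n%:R / delta <= (Num.ceil (n%:R / delta))%:~R by apply: ceil_ge.
rewrite ler_pdivrMr // => ceil_le.
have : m%:R <= 12 * (Num.ceil (n%:R / delta))%:~R :> R by nra.
by apply.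
Qed.

End CeilingBounds.

Theorem mainTheorem19 (R : realType) (V : finType) (e : rel V)
  (delta : R) (T : walk R V) :
  simple_graph e -> connected_graph e ->
  0 < delta ->
  ((12 * Num.ceil (#|V|%:R / delta) <= #|V|%:Z)%R) ->
  shortest_delta_tour e delta T ->
  exists Z : seq (gpoint R V),
    {subset Z <= stops T} /\
    ((size Z)%:Z <= 12 * Num.ceil (#|V|%:R / delta))%R /\
    (forall p : gpoint R V, is_point e p ->
       exists2 z, z \in Z & dist e p z <= delta).
Proof.
move=> [esym eirr] conn delta_gt0 k_le [deltaT _].
have [[walkT _] _] := deltaT; have [[e_T _] _] := walkT.
have nbr_edge := connected_nbr_edge conn e_T.
have V_gt0 : (0 < #|V|)%N by apply/card_gt0P; exists (wstart T).1.1.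
have delta_ge12 := ceil_div_bound_ge12 delta_gt0 V_gt0 k_le.
have delta_ge1 : 1 <= delta by apply: le_trans delta_ge12; rewrite ler1n.
have cover_stops := delta_tour_stops_cover esym eirr conn delta_ge1 deltaT.
have [[z zT z_center]|no_center] :=
  pselect (exists2 z, z \in stops T & forall p, is_point e p -> dist e p z <= delta).
  exists [:: z]; split=> [_ /[1!inE] /eqP -> //|]; split=> [|p pp].
    by have := ceil_div_gt0 delta_gt0 V_gt0; rewrite /=; lia.
  by exists z; rewrite ?mem_head ?z_center.
have far z : z \in stops T -> exists2 y, is_point e y & delta < dist e y z.
  move=> zT; apply: contra_notP no_center => no_far; exists z => // p pp.
  by rewrite leNgt; apply/negP => pz_far; apply: no_far; exists p.
have cover_undup : covers e (undup (stops T)) delta.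
  by move=> p /cover_stops [z zT pz]; exists z; rewrite ?mem_undup.
have [Z Z_sub [cover_Z minimal_Z]] := minimal_subseq (P := covers e ^~ delta) cover_undup.
have uZ : uniq Z := subseq_uniq Z_sub (undup_uniq _).
have Z_stops : {subset Z <= stops T} by move=> z /(mem_subseq Z_sub); rewrite mem_undup.
have [pz private] := minimal_cover_private uZ cover_Z minimal_Z.
exists Z; split=> //; split=> //; apply: size_le_ceil_div delta_gt0 _.
apply: (private_cover_size esym eirr conn nbr_edge delta_ge12 uZ _ private).
  by move=> z /Z_stops; apply: point_stops.
by move=> z /Z_stops; apply: far.
Qed.
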